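(* There is an interpretation of $L(I)$ in $W(I)$, for which the co-ordinate map from the set of finite unions of closed intervals of $I$ to (finite subsets of $I$)$^2$ is given by $A \mapsto (l(A),r(A))$, the pair consisting of the set of left endpoints and the set of right endpoints of $A$.
   Context: Let $I$ be a dense linear order with a left endpoint $0$ and no right endpoint. $W(I)$ is the structure in the signature $\{\cup,\cap,\bot,\{0\},\min,\max,\mathrm{ips}\}$ whose universe is the collection of finite subsets of $I$, with $\cup,\cap$ union and intersection, $\bot$ the empty set, the constant $\{0\}$ interpreted as the singleton of the left endpoint, $\min$ and $\max$ sending a nonempty finite set to the singleton of its minimum (resp. maximum) and fixing $\emptyset$, and $\mathrm{ips}$ the binary function $\mathrm{ips}(A,B)=\{i\in A : \text{the successor of } i \text{ in } A \text{ (in the induced order) exists and lies in } B\}$. $L(I)$ is the structure in the signature $\{\cup,\cap,\bot,\{0\},\min,\max,l,r\}$ whose universe is the collection of finite unions of closed intervals of $I$ (closed intervals being sets of the form $[i,j]$, $[i,+\infty)$, $(-\infty,j]$), with $\cup,\cap$ union and intersection, $\bot$ the empty set, $\{0\}$ the singleton of the left endpoint, $\min$ and $\max$ sending a set to the singleton of its minimum (resp. maximum), with $\min(\emptyset)=\max(\emptyset)=\emptyset$ and $\max(A)=\emptyset$ for unbounded $A$, and $l$, $r$ sending a set to the set of its left (resp. right) endpoints. *)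

From HB Require Import structures.
From mathcomp Require Import all_boot all_order.
From mathcomp Require Import finmap.
From Stdlib Require List.
Set Implicit Arguments. Unset Strict Implicit. Unset Printing Implicit Defensive.
Import Order.TTheory.

Inductive wterm : Type :=
| WVar  of nat
| WUnion of wterm & wterm
| WInter of wterm & wterm
| WBot
| WZero
| WMin of wterm
| WMax of wterm
| WIps of wterm & wterm.

Inductive wformula : Type :=
| WEq  of wterm & wterm
| WNot of wformula
| WAnd of wformula & wformula
| WOr  of wformula & wformula
| WImp of wformula & wformula
| WEx  of nat & wformula
| WAll of nat & wformula.

Section Structures.
Local Open Scope order_scope.
Local Open Scope fset_scope.

Context {d : Order.disp_t} {I : orderType d} (z : I).

Definition Wmin (A : {fset I}) : {fset I} :=
  [fset i in A | all (fun k => i <= k) A].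
Definition Wmax (A : {fset I}) : {fset I} :=
  [fset i in A | all (fun k => k <= i) A].
(* i is in ips A B iff i is in A, the successor j of i in A exists,
   and j lies in B. *)
Definition Wips (A B : {fset I}) : {fset I} :=
  [fset i in A | has (fun j => [&& i < j, j \in B &
                     all (fun k => ~~ ((i < k) && (k < j))) A]) A].

Fixpoint weval (e : nat -> {fset I}) (t : wterm) : {fset I} :=
  match t with
  | WVar n => e n
  | WUnion t1 t2 => weval e t1 `|` weval e t2
  | WInter t1 t2 => weval e t1 `&` weval e t2
  | WBot => fset0
  | WZero => [fset z]
  | WMin t1 => Wmin (weval e t1)
  | WMax t1 => Wmax (weval e t1)
  | WIps t1 t2 => Wips (weval e t1) (weval e t2)
  end.

Definition upd (e : nat -> {fset I}) (n : nat) (X : {fset I}) : nat -> {fset I} :=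
  fun m => if m == n then X else e m.

Fixpoint wholds (e : nat -> {fset I}) (f : wformula) : Prop :=
  match f with
  | WEq t1 t2 => weval e t1 = weval e t2
  | WNot f1 => ~ wholds e f1
  | WAnd f1 f2 => wholds e f1 /\ wholds e f2
  | WOr f1 f2 => wholds e f1 \/ wholds e f2
  | WImp f1 f2 => wholds e f1 -> wholds e f2
  | WEx n f1 => exists X, wholds (upd e n X) f1
  | WAll n f1 => forall X, wholds (upd e n X) f1
  end.

Definition env_of (s : seq {fset I}) : nat -> {fset I} := fun n => nth fset0 s n.

(* Subsets of I are predicates I -> Prop, compared extensionally.     *)
Definition seteq (A B : I -> Prop) : Prop := forall x, A x <-> B x.

Definition is_cint (C : I -> Prop) : Prop :=
  (exists i j, seteq C (fun x => i <= x /\ x <= j)) \/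
  (exists i, seteq C (fun x => i <= x)) \/
  (exists j, seteq C (fun x => x <= j)).

Definition LI (A : I -> Prop) : Prop :=
  exists s : seq (I -> Prop),
    (forall C, List.In C s -> is_cint C) /\
    seteq A (fun x => exists C, List.In C s /\ C x).

Definition Lunion (A B : I -> Prop) : I -> Prop := fun x => A x \/ B x.
Definition Linter (A B : I -> Prop) : I -> Prop := fun x => A x /\ B x.
Definition Lbot : I -> Prop := fun _ => False.
Definition Lzero : I -> Prop := fun x => x = z.
Definition Lmin (A : I -> Prop) : I -> Prop := fun x => A x /\ forall y, A y -> x <= y.
Definition Lmax (A : I -> Prop) : I -> Prop := fun x => A x /\ forall y, A y -> y <= x.
Definition Ll (A : I -> Prop) : I -> Prop :=
  fun x => A x /\ (x = z \/ exists y, y < x /\ forall w, y < w -> w < x -> ~ A w).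
Definition Lr (A : I -> Prop) : I -> Prop :=
  fun x => A x /\ exists y, x < y /\ forall w, x < w -> w < y -> ~ A w.

Definition coord (A : I -> Prop) (X Y : {fset I}) : Prop :=
  (forall x, x \in X <-> Ll A x) /\ (forall x, x \in Y <-> Lr A x).

Definition defines_domain (phi : wformula) : Prop :=
  forall X Y : {fset I},
    wholds (env_of [:: X; Y]) phi <-> exists A, LI A /\ coord A X Y.

Definition defines_eq (phi : wformula) : Prop :=
  forall A B XA YA XB YB, LI A -> LI B -> coord A XA YA -> coord B XB YB ->
    (wholds (env_of [:: XA; YA; XB; YB]) phi <-> seteq A B).

Definition defines_const (c : I -> Prop) (phi : wformula) : Prop :=
  forall C XC YC, LI C -> coord C XC YC ->
    (wholds (env_of [:: XC; YC]) phi <-> seteq c C).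

Definition defines_fun1 (F : (I -> Prop) -> (I -> Prop)) (phi : wformula) : Prop :=
  forall A C XA YA XC YC, LI A -> LI C -> coord A XA YA -> coord C XC YC ->
    (wholds (env_of [:: XA; YA; XC; YC]) phi <-> seteq (F A) C).

Definition defines_fun2 (F : (I -> Prop) -> (I -> Prop) -> (I -> Prop))
    (phi : wformula) : Prop :=
  forall A B C XA YA XB YB XC YC, LI A -> LI B -> LI C ->
    coord A XA YA -> coord B XB YB -> coord C XC YC ->
    (wholds (env_of [:: XA; YA; XB; YB; XC; YC]) phi <-> seteq (F A B) C).

Definition interpretation_L_in_W_via_lr : Prop :=
  (forall A, LI A -> exists X Y, coord A X Y) /\
  exists phiD phiEq phiU phiI phiB phiZ phiMin phiMax phil phir : wformula,
    defines_domain phiD /\ defines_eq phiEq /\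
    defines_fun2 Lunion phiU /\ defines_fun2 Linter phiI /\
    defines_const Lbot phiB /\ defines_const Lzero phiZ /\
    defines_fun1 Lmin phiMin /\ defines_fun1 Lmax phiMax /\
    defines_fun1 Ll phil /\ defines_fun1 Lr phir.

End Structures.

From Pilot Require Import Defs.
From mathcomp Require Import all_boot all_order finmap boolp.
Import Order.TTheory.
Local Open Scope order_scope.
Local Open Scope fset_scope.

(* A point x lies in a finite union of closed intervals A iff some left endpoint
   a <= x of A has no right endpoint of A in [a, x).  So A is recovered from the
   pair (l(A), r(A)), and each operation of L(I) becomes a first-order condition
   on points of I, the two finite sets, the order and 0.  Such a condition is
   expressed in W(I) by letting the point a stand for the singleton {a}: the
   singletons are the nonempty X with min X = X, a <= b iff min ({a} U {b}) = {a},
   and a is in X iff {a} n X = {a}.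
   The reconstruction is checked against the endpoints of the intervals A is built
   from: an open interval free of them either misses A or lies inside it, and by
   density no other point is an endpoint of A, which also makes l(A) and r(A)
   finite. *)

Lemma InP (T : eqType) (x : T) (s : seq T) : reflect (List.In x s) (x \in s).
Proof.
elim: s => [|y s IH] /=; first exact: ReflectF.
rewrite inE; apply: (iffP predU1P) => [[->|/IH]|[<-|/IH]]; by [left | right].
Qed.

Lemma finite_pred_fset {T : choiceType} {s : seq T} {P : T -> Prop} :
  (forall x, P x -> x \in s) -> exists X : {fset T}, forall x, x \in X <-> P x.
Proof.
move=> Ps; exists [fset x in s | `[< P x >]] => x; rewrite !inE.
by split=> [/andP[_ /asboolP]//|Px]; rewrite Ps //; apply/asboolP.
Qed.

Lemma seq_max_exists {d : Order.disp_t} {T : orderType d} {s : seq T} {P : T -> Prop} :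
  (exists2 c, c \in s & P c) ->
  exists c, [/\ c \in s, P c & forall c', c' \in s -> P c' -> c' <= c].
Proof.
elim: s => [[]//|a s IH] [c cs Pc].
have [sP|sNP] := pselect (exists2 c, c \in s & P c); last first.
  have Pa : P a by move: cs; rewrite inE => /predU1P[<-//|cs]; case: sNP; exists c.
  exists a; split=> [||c']; [exact: mem_head | done |].
  by rewrite inE => /predU1P[->|c's Pc']; [rewrite lexx | case: sNP; exists c'].
have [m [ms Pm mmax]] := IH sP.
have [[Pa ma]|a_low] := pselect (P a /\ m <= a).
  exists a; split=> [||c']; [exact: mem_head | done |].
  by rewrite inE => /predU1P[->|c's Pc']; [rewrite lexx | exact: le_trans (mmax _ c's Pc') ma].
exists m; split=> [||c']; [by rewrite inE ms orbT | done |].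
rewrite inE => /predU1P[-> Pa|]; last exact: mmax.
by rewrite leNgt; apply/negP => /ltW ma; apply: a_low.
Qed.

Lemma seq_min_exists {d : Order.disp_t} {T : orderType d} {s : seq T} {P : T -> Prop} :
  (exists2 c, c \in s & P c) ->
  exists c, [/\ c \in s, P c & forall c', c' \in s -> P c' -> c <= c'].
Proof. exact: (@seq_max_exists _ T^d s P). Qed.

Section SingletonCoding.
Context {d : Order.disp_t} {I : orderType d}.

Lemma in_Wmin (A : {fset I}) x :
  x \in Wmin A <-> x \in A /\ forall k, k \in A -> x <= k.
Proof. by rewrite /Wmin inE; split=> [/andP[? /allP]|[? /allP ?]]; last apply/andP. Qed.

Lemma Wmin_id_fset1P (X : {fset I}) :
  X <> fset0 /\ Wmin X = X <-> exists a, X = [fset a].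
Proof.
split=> [[X0 XminX]|[a ->]].
- have [//|[a aX]] := fset_0Vmem X; exists a; apply/fsetP => b; rewrite inE.
  apply/idP/eqP => [bX|->//].
  have /in_Wmin[_ ab] : b \in Wmin X by rewrite XminX.
  have /in_Wmin[_ ba] : a \in Wmin X by rewrite XminX.
  by apply/eqP; rewrite eq_le ab ?ba.
- split=> [/fsetP/(_ a)|]; first by rewrite !inE eqxx.
  apply/fsetP => b; apply/idP/idP => [/in_Wmin[]//|/fset1P->].
  by apply/in_Wmin; split=> [|k /fset1P->]; rewrite ?inE ?eqxx.
Qed.

Lemma fset1I_eq (a : I) (X : {fset I}) : [fset a] `&` X = [fset a] <-> a \in X.
Proof. by rewrite -fsub1set; apply: rwP; apply: fsetIidPl. Qed.

Lemma Wmin_fset2_eq (a b : I) : Wmin ([fset a] `|` [fset b]) = [fset a] <-> a <= b.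
Proof.
split=> [/fsetP/(_ a)|ab].
  by rewrite inE eqxx => /in_Wmin[_]; apply; rewrite !inE eqxx orbT.
apply/fsetP => x; apply/idP/fset1P => [/in_Wmin[xab xle]|->].
  apply/eqP; rewrite eq_le xle ?inE ?eqxx //=.
  by move: xab; rewrite !inE => /orP[]/eqP->; rewrite ?lexx.
by apply/in_Wmin; split=> [|k]; rewrite !inE ?eqxx // => /orP[]/eqP->; rewrite ?lexx.
Qed.

End SingletonCoding.

Inductive pformula : Type :=
| PIn of nat & nat
| PLe of nat & nat
| PLt of nat & nat
| PZero of nat
| PNot of pformula
| PAnd of pformula & pformula
| POr of pformula & pformula
| PImp of pformula & pformula
| PAll of nat & pformula
| PEx of nat & pformula.

Definition PIff (f g : pformula) : pformula := PAnd (PImp f g) (PImp g f).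

Fixpoint pscoped (n : nat) (P : pred nat) (f : pformula) : bool :=
  match f with
  | PIn p k => P p && (k < n)%N
  | PLe p q | PLt p q => P p && P q
  | PZero p => P p
  | PNot f => pscoped n P f
  | PAnd f g | POr f g | PImp f g => pscoped n P f && pscoped n P g
  | PAll p f | PEx p f => pscoped n (fun q => (q == p) || P q) f
  end.

Definition wsingleton (m : nat) : wformula :=
  WAnd (WNot (WEq (WVar m) WBot)) (WEq (WMin (WVar m)) (WVar m)).

Definition wle (m m' : nat) : wformula :=
  WEq (WMin (WUnion (WVar m) (WVar m'))) (WVar m).

(* W-variables below [n] are the set variables; point variable [p] is the
   singleton held by W-variable [n + p]. *)
Fixpoint compile (n : nat) (f : pformula) : wformula :=
  match f with
  | PIn p k => WEq (WInter (WVar (n + p)) (WVar k)) (WVar (n + p))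
  | PLe p q => wle (n + p) (n + q)
  | PLt p q => WNot (wle (n + q) (n + p))
  | PZero p => WEq (WVar (n + p)) WZero
  | PNot f => WNot (compile n f)
  | PAnd f g => WAnd (compile n f) (compile n g)
  | POr f g => WOr (compile n f) (compile n g)
  | PImp f g => WImp (compile n f) (compile n g)
  | PAll p f => WAll (n + p) (WImp (wsingleton (n + p)) (compile n f))
  | PEx p f => WEx (n + p) (WAnd (wsingleton (n + p)) (compile n f))
  end.

Section PointSemantics.
Context {d : Order.disp_t} {I : orderType d} (z : I).

Definition vupd (v : nat -> I) (p : nat) (a : I) : nat -> I :=
  fun q => if q == p then a else v q.

Fixpoint psem (S : nat -> {fset I}) (v : nat -> I) (f : pformula) : Prop :=
  match f with
  | PIn p k => v p \in S k
  | PLe p q => v p <= v q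
  | PLt p q => v p < v q
  | PZero p => v p = z
  | PNot f => ~ psem S v f
  | PAnd f g => psem S v f /\ psem S v g
  | POr f g => psem S v f \/ psem S v g
  | PImp f g => psem S v f -> psem S v g
  | PAll p f => forall a, psem S (vupd v p a) f
  | PEx p f => exists a, psem S (vupd v p a) f
  end.

Definition env_agree n (P : pred nat) S (E : nat -> {fset I}) v : Prop :=
  (forall k, (k < n)%N -> E k = S k) /\ (forall p, P p -> E (n + p)%N = [fset v p]).

Lemma env_agree_upd {n P S E v} p a :
  env_agree n P S E v ->
  env_agree n (fun q => (q == p) || P q) S (upd E (n + p) [fset a]) (vupd v p a).
Proof.
case=> ES Ev; split=> [k kn|q]; rewrite /upd.
  by case: eqP => [kE|_]; [move: kn; rewrite kE ltnNge leq_addr | exact: ES].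
by rewrite /vupd eqn_add2l; case: eqP => //= _; exact: Ev.
Qed.

Lemma wholds_upd_singleton E m X :
  wholds z (upd E m X) (wsingleton m) <-> exists a, X = [fset a].
Proof. by rewrite /= /upd eqxx; exact: Wmin_id_fset1P. Qed.

Lemma compileP n P S E v f :
  pscoped n P f -> env_agree n P S E v -> wholds z E (compile n f) <-> psem S v f.
Proof.
elim: f P E v => [p k|p q|p q|p|f IH|f IHf g IHg|f IHf g IHg|f IHf g IHg|p f IH|p f IH]
  P E v /=.
- by case/andP=> Pp kn [ES Ev]; rewrite Ev // ES //; exact: fset1I_eq.
- by case/andP=> Pp Pq [_ Ev]; rewrite Ev // Ev //; exact: Wmin_fset2_eq.
- by case/andP=> Pp Pq [_ Ev]; rewrite Ev // Ev // Wmin_fset2_eq ltNge; split=> /negP.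
- by move=> Pp [_ Ev]; rewrite Ev //; split=> [/fset1_inj|->].
- by move=> f_ok agree; rewrite (IH P E v).
- by case/andP=> f_ok g_ok agree; rewrite (IHf P E v) // (IHg P E v).
- by case/andP=> f_ok g_ok agree; rewrite (IHf P E v) // (IHg P E v).
- by case/andP=> f_ok g_ok agree; rewrite (IHf P E v) // (IHg P E v).
- move=> f_ok agree.
  have IHa a := IH _ _ _ f_ok (env_agree_upd p a agree).
  split=> [H a | H X /wholds_upd_singleton[a Xa]].
    by apply/IHa/H/wholds_upd_singleton; exists a.
  by rewrite Xa; apply/IHa.
- move=> f_ok agree.
  have IHa a := IH _ _ _ f_ok (env_agree_upd p a agree).
  split=> [[X [/wholds_upd_singleton[a ->] /IHa]]|[a /IHa H]]; first by exists a.
  by exists [fset a]; split=> //; apply/wholds_upd_singleton; exists a.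
Qed.

Lemma closed_compileP n S f :
  pscoped n pred0 f -> wholds z S (compile n f) <-> psem S (fun=> z) f.
Proof. by move=> f_ok; apply: compileP f_ok _. Qed.

End PointSemantics.

(* The formulas below transcribe the definitions of Defs literally, read on the
   set coded by the set variables [kx], [ky], so that their semantics agrees
   with those definitions by conversion.  [in_lr] binds the point variables 1
   and 2, so [p] must be neither. *)
Definition in_lr (kx ky p : nat) : pformula :=
  PEx 1 (PAnd (PIn 1 kx) (PAnd (PLe 1 p)
    (PAll 2 (PImp (PIn 2 ky) (PNot (PAnd (PLe 1 2) (PLt 2 p))))))).

Definition is_left_end (kx ky : nat) : pformula :=
  PAnd (in_lr kx ky 0) (POr (PZero 0) (PEx 3 (PAnd (PLt 3 0)
    (PAll 4 (PImp (PLt 3 4) (PImp (PLt 4 0) (PNot (in_lr kx ky 4)))))))).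

Definition is_right_end (kx ky : nat) : pformula :=
  PAnd (in_lr kx ky 0) (PEx 3 (PAnd (PLt 0 3)
    (PAll 4 (PImp (PLt 0 4) (PImp (PLt 4 3) (PNot (in_lr kx ky 4))))))).

Definition is_min (kx ky : nat) : pformula :=
  PAnd (in_lr kx ky 0) (PAll 3 (PImp (in_lr kx ky 3) (PLe 0 3))).

Definition is_max (kx ky : nat) : pformula :=
  PAnd (in_lr kx ky 0) (PAll 3 (PImp (in_lr kx ky 3) (PLe 3 0))).

Definition codes (kx ky : nat) (g : pformula) : pformula :=
  PAll 0 (PIff g (in_lr kx ky 0)).

Definition is_lr_pair : pformula :=
  PAnd (PAll 0 (PIff (PIn 0 0) (is_left_end 0 1)))
       (PAll 0 (PIff (PIn 0 1) (is_right_end 0 1))).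

Section EndpointCoding.
Context {d : Order.disp_t} {I : orderType d} (z : I).
Hypothesis z_least : forall x : I, z <= x.
Hypothesis I_dense : forall x y : I, x < y -> exists w, x < w < y.

Lemma seteqE (A B : I -> Prop) : seteq A B -> A = B.
Proof. by move=> AB; apply/funext => x; apply/propext. Qed.

Definition segment_in (A : I -> Prop) (a b : I) : Prop :=
  forall w, a <= w -> w <= b -> A w.

Lemma segment_cat {A a b c} :
  segment_in A a b -> segment_in A b c -> segment_in A a c.
Proof. by move=> ab bc w aw wc; case: (leP w b) => [wb|/ltW bw]; [apply: ab | apply: bc]. Qed.

Lemma segment_not_Lr {A a b} : segment_in A a b -> a < b -> ~ Lr A a.
Proof.
move=> Aab ab [_ [y [ay gap]]].
have [w /andP[aw]] : exists w, a < w < Order.min y b by apply: I_dense; rewrite lt_min ay.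
rewrite lt_min => /andP[wy wb]; apply: (gap w aw wy).
by apply: Aab; exact: ltW.
Qed.

Lemma segment_not_Ll {A a b} : segment_in A a b -> a < b -> ~ Ll z A b.
Proof.
move=> Aab ab [_ [bz|[y [yb gap]]]]; first by move: ab; rewrite bz ltNge z_least.
have [w /andP[]] : exists w, Order.max y a < w < b by apply: I_dense; rewrite gt_max yb.
rewrite gt_max => /andP[yw aw] wb; apply: (gap w yw wb).
by apply: Aab; exact: ltW.
Qed.

Definition in_cint (p : I * option I) (x : I) : Prop :=
  p.1 <= x /\ (if p.2 is Some j then x <= j else True).

Definition cunion (L : seq (I * option I)) (x : I) : Prop :=
  exists2 p, p \in L & in_cint p x.

Definition ends (L : seq (I * option I)) : seq I := z :: map fst L ++ pmap snd L.

Lemma ends_fst {L p} : p \in L -> p.1 \in ends L.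
Proof. by move=> pL; rewrite inE mem_cat map_f ?orbT. Qed.

Lemma ends_snd {L p j} : p \in L -> p.2 = Some j -> j \in ends L.
Proof. by move=> pL pj; rewrite inE mem_cat mem_pmap -pj map_f ?orbT. Qed.

Lemma cunion_segment {L p x} : p \in L -> in_cint p x -> segment_in (cunion L) p.1 x.
Proof.
move=> pL [_ xj] w p1w wx; exists p => //; split=> //.
by move: xj; case: p.2 => // j; exact: le_trans.
Qed.

Lemma cunion_cons p L x : cunion (p :: L) x <-> in_cint p x \/ cunion L x.
Proof.
split=> [[q] /predU1P[-> | qL] qx|[px|[q qL qx]]]; [by left | by right; exists q | |].
  by exists p; rewrite ?mem_head.
by exists q; rewrite // inE qL orbT.
Qed.

Lemma cint_in_cint p : is_cint (in_cint p).
Proof.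
rewrite /in_cint; case: p.2 => [j|].
  by left; exists p.1, j.
by right; left; exists p.1 => x; split=> [[]|].
Qed.

Lemma in_cint_exists C : is_cint C -> exists p, seteq C (in_cint p).
Proof.
case=> [[i [j C_ij]]|[[i C_i]|[j C_j]]]; first by exists (i, Some j).
  by exists (i, None) => x; rewrite C_i; split=> [|[]].
by exists (z, Some j) => x; rewrite C_j /in_cint /= z_least; split=> [|[]].
Qed.

Lemma cunion_exists (T : Type) (s : seq T) (Q : T -> I -> Prop) :
  (forall t, List.In t s -> exists p, seteq (Q t) (in_cint p)) ->
  exists L, seteq (fun x => exists t, List.In t s /\ Q t x) (cunion L).
Proof.
elim: s => [|t s IH] Q_cint.
  by exists [::] => x; split=> [[? []]|[]].
have [p /seteqE Qp] := Q_cint t (or_introl erefl).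
have [L /seteqE sL] := IH (fun t' ts => Q_cint t' (or_intror ts)).
exists (p :: L) => x; rewrite cunion_cons -Qp -sL /=; split.
  by case=> t' [[<-|t's] Qx]; [left | right; exists t'].
by case=> [Qx|[t' [t's Qx]]]; [exists t; split; [left|] | exists t'; split; [right|]].
Qed.

Lemma LI_cunion L : LI (cunion L).
Proof.
exists (map in_cint L); split.
  by move=> C /List.in_map_iff[p [<- _]]; exact: cint_in_cint.
move=> x; split=> [[p /InP pL px]|[C [/List.in_map_iff[p [<- /InP pL]] px]]].
  by exists (in_cint p); split=> //; apply: List.in_map.
by exists p.
Qed.

Lemma LI_cunionP A : LI A -> exists L, A = cunion L.
Proof.
case=> s [s_cint /seteqE ->].
have [L /seteqE sL] := @cunion_exists _ s id (fun C Cs => in_cint_exists C (s_cint C Cs)).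
by exists L.
Qed.

Lemma cunion_gap {L y u w} :
  (forall e, e \in ends L -> ~ (y < e < u)) -> y < w < u -> cunion L w ->
  segment_in (cunion L) y u.
Proof.
move=> no_end /andP[yw wu] [p pL [p1w p2w]] w' yw' w'u; exists p => //.
have p1y : p.1 <= y.
  rewrite leNgt; apply/negP => yp1.
  by apply: (no_end _ (ends_fst pL)); rewrite yp1 (le_lt_trans p1w wu).
split; first exact: le_trans p1y yw'.
move: p2w; case pj: p.2 => [j|] // wj.
rewrite (le_trans w'u) // leNgt; apply/negP => ju.
by apply: (no_end _ (ends_snd pL pj)); rewrite ju (lt_le_trans yw wj).
Qed.

Definition lr_piece (Y : {fset I}) (a x : I) : Prop :=
  a <= x /\ forall b, b \in Y -> ~ (a <= b /\ b < x).

Definition lr_recon (X Y : {fset I}) (x : I) : Prop :=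
  exists a, a \in X /\ lr_piece Y a x.

Lemma cunion_sub_lr_recon L X Y x :
  coord z (cunion L) X Y -> cunion L x -> lr_recon X Y x.
Proof.
move=> [Xl Yr] [p pL px].
pose from_x c := c <= x /\ segment_in (cunion L) c x.
have [a [_ [ax ax_in] amin]] : exists a, [/\ a \in ends L, from_x a &
    forall c, c \in ends L -> from_x c -> a <= c].
  apply: seq_min_exists; exists p.1; first exact: ends_fst.
  by split; [case: px | exact: cunion_segment].
exists a; split; last first.
  split=> // b /Yr Lrb [ab bx].
  by apply: (segment_not_Lr _ bx Lrb) => w bw; apply: ax_in; exact: le_trans bw.
apply/Xl; split; first exact: ax_in.
have [->|az] := eqVneq a z; [by left | right].
have za : z < a by rewrite lt_neqAle eq_sym az z_least.
have [y [yE ya ymax]] : exists y, [/\ y \in ends L, y < a &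
    forall c, c \in ends L -> c < a -> c <= y].
  by apply: seq_max_exists; exists z; rewrite ?mem_head.
exists y; split=> // w yw wa Aw.
have ya_in : segment_in (cunion L) y a.
  apply: (cunion_gap _ _ Aw); last by rewrite yw.
  by move=> e eE /andP[ye ea]; move: (ymax e eE ea); rewrite leNgt ye.
have := amin y yE (conj (le_trans (ltW ya) ax) (segment_cat ya_in ax_in)).
by rewrite leNgt ya.
Qed.

Lemma lr_recon_sub_cunion L X Y x :
  coord z (cunion L) X Y -> lr_recon X Y x -> cunion L x.
Proof.
move=> [Xl Yr] [a [/Xl[Aa _] [ax no_r]]]; apply: contrapT => Ax_not.
pose upto_x c := [/\ a <= c, c <= x & segment_in (cunion L) a c].
have [b [_ [ab bx ab_in] bmax]] : exists b, [/\ b \in a :: ends L, upto_x b &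
    forall c, c \in a :: ends L -> upto_x c -> c <= b].
  apply: seq_max_exists; exists a; rewrite ?mem_head //; split=> // w aw wa.
  by have -> : w = a by apply/eqP; rewrite eq_le wa aw.
have bx' : b < x.
  rewrite lt_neqAle bx andbT; apply/eqP => bxE.
  by apply: Ax_not; rewrite -bxE; apply: ab_in.
apply: (no_r b) (conj ab bx'); apply/Yr; split; first exact: ab_in.
have [y [yE by_ ymin]] : exists y, [/\ y \in x :: ends L, b < y &
    forall c, c \in x :: ends L -> b < c -> y <= c].
  by apply: seq_min_exists; exists x; rewrite ?mem_head.
exists y; split=> // w bw wy Aw.
have by_in : segment_in (cunion L) b y.
  apply: (cunion_gap _ _ Aw); last by rewrite bw.
  move=> e eE /andP[be ey]; have := ymin e _ be.
  by rewrite inE eE orbT leNgt ey => /(_ isT).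
have yx : y <= x by apply: ymin bx'; exact: mem_head.
have [yxE|y_ne_x] := eqVneq y x.
  by apply: Ax_not; apply: by_in; rewrite ?yxE // ltW.
have yE' : y \in a :: ends L.
  by move: yE; rewrite in_cons (negbTE y_ne_x) /= => yE; rewrite in_cons yE orbT.
have := bmax y yE' (And3 (le_trans ab (ltW by_)) yx (segment_cat ab_in by_in)).
by rewrite leNgt by_.
Qed.

Lemma coord_lr_recon {A X Y} : LI A -> coord z A X Y -> A = lr_recon X Y.
Proof.
move=> /LI_cunionP[L ->] cXY; apply/seteqE => x; split.
  exact: cunion_sub_lr_recon.
exact: lr_recon_sub_cunion.
Qed.

Lemma lr_piece_cint Y a : exists p, seteq (lr_piece Y a) (in_cint p).
Proof.
have [Y_above|none] := pselect (exists2 b, b \in Y & a <= b).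
  have [m [mY am mmin]] := seq_min_exists Y_above.
  exists (a, Some m) => x; split=> [[ax no_r]|[/= ax xm]].
    by split=> //=; rewrite leNgt; apply/negP => mx; apply: (no_r m mY).
  split=> // b bY [ab bx].
  by have := mmin b bY ab; rewrite leNgt (lt_le_trans bx xm).
exists (a, None) => x; split=> [[]//|[/= ax _]].
by split=> // b bY [ab _]; apply: none; exists b.
Qed.

Lemma LI_lr_recon X Y : LI (lr_recon X Y).
Proof.
have [L /seteqE sL] := @cunion_exists _ X (lr_piece Y) (fun a _ => lr_piece_cint Y a).
suff -> : lr_recon X Y = cunion L by exact: LI_cunion.
by rewrite -sL; apply/seteqE => x; split=> -[a [/InP aX ax]]; exists a.
Qed.

Lemma Ll_cunion_ends L x : Ll z (cunion L) x -> x \in ends L.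
Proof.
move=> Lx; have [[p pL [p1x xj]] _] := Lx.
have [<-|p1_ne_x] := eqVneq p.1 x; first exact: ends_fst.
have p1x' : p.1 < x by rewrite lt_neqAle p1_ne_x.
by case: (segment_not_Ll (cunion_segment pL (conj p1x xj)) p1x' Lx).
Qed.

Lemma Lr_cunion_ends L x : Lr (cunion L) x -> x \in ends L.
Proof.
move=> Lx; have [[p pL [p1x xj]] [y [xy _]]] := Lx.
pose u := if p.2 is Some j then j else y.
have [ux|u_ne_x] := eqVneq u x.
  move: ux; rewrite /u; case pj: p.2 => [j|] jx; first by rewrite -jx; exact: ends_snd pL pj.
  by move: xy; rewrite jx ltxx.
have xu : x < u by rewrite lt_neqAle eq_sym u_ne_x /u; move: xj; case: p.2 => // _; exact: ltW.
exfalso; apply: (segment_not_Lr _ xu Lx) => w xw wu; exists p => //.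
by split; [exact: le_trans xw | move: wu; rewrite /u; case: p.2].
Qed.

Lemma coord_exists A : LI A -> exists X Y, coord z A X Y.
Proof.
move=> /LI_cunionP[L ->].
have [X Xl] := finite_pred_fset (@Ll_cunion_ends L).
have [Y Yr] := finite_pred_fset (@Lr_cunion_ends L).
by exists X, Y.
Qed.

Lemma psem_codes {S v kx ky g} (G : I -> Prop) :
  (forall a, psem z S (vupd v 0 a) g <-> G a) ->
  psem z S v (codes kx ky g) <-> seteq G (lr_recon (S kx) (S ky)).
Proof.
move=> gG; have -> : G = fun a => psem z S (vupd v 0 a) g by apply/seteqE => a; rewrite gG.
exact: iff_refl.
Qed.

Lemma codes_defines_const {c g} :
  pscoped 6 pred0 (codes 0 1 g) -> (forall S v, psem z S v g <-> c (v 0)) ->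
  defines_const z c (compile 6 (codes 0 1 g)).
Proof.
move=> g_ok gc C XC YC LC cC.
rewrite closed_compileP // (psem_codes c) //.
by rewrite -(coord_lr_recon LC cC).
Qed.

Lemma codes_defines_fun1 {F g} :
  pscoped 6 pred0 (codes 2 3 g) ->
  (forall S v, psem z S v g <-> F (lr_recon (S 0) (S 1)) (v 0)) ->
  defines_fun1 z F (compile 6 (codes 2 3 g)).
Proof.
move=> g_ok gF A C XA YA XC YC LA LC cA cC.
rewrite closed_compileP // (psem_codes (F A)).
  by rewrite -(coord_lr_recon LC cC).
by move=> a; rewrite gF -(coord_lr_recon LA cA).
Qed.

Lemma codes_defines_fun2 {F g} :
  pscoped 6 pred0 (codes 4 5 g) ->
  (forall S v, psem z S v g <->
     F (lr_recon (S 0) (S 1)) (lr_recon (S 2) (S 3)) (v 0)) ->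
  defines_fun2 z F (compile 6 (codes 4 5 g)).
Proof.
move=> g_ok gF A B C XA YA XB YB XC YC LA LB LC cA cB cC.
rewrite closed_compileP // (psem_codes (F A B)).
  by rewrite -(coord_lr_recon LC cC).
by move=> a; rewrite gF -(coord_lr_recon LA cA) -(coord_lr_recon LB cB).
Qed.

Lemma is_lr_pair_defines_domain : defines_domain z (compile 6 is_lr_pair).
Proof.
move=> X Y; rewrite closed_compileP //.
change (coord z (lr_recon X Y) X Y <-> exists A, LI A /\ coord z A X Y).
split=> [cXY|[A [LA cA]]]; first by exists (lr_recon X Y); split=> //; exact: LI_lr_recon.
by rewrite -(coord_lr_recon LA cA).
Qed.

End EndpointCoding.

Theorem theorem6p4 (d : Order.disp_t) (I : orderType d) (z : I)
    (z_least : forall x : I, z <= x)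
    (I_dense : forall x y : I, x < y -> exists w, x < w < y)
    (I_no_right_end : forall x : I, exists y, x < y) :
  interpretation_L_in_W_via_lr z.
Proof.
split; first exact: coord_exists.
exists (compile 6 is_lr_pair), (compile 6 (codes 2 3 (in_lr 0 1 0))),
  (compile 6 (codes 4 5 (POr (in_lr 0 1 0) (in_lr 2 3 0)))),
  (compile 6 (codes 4 5 (PAnd (in_lr 0 1 0) (in_lr 2 3 0)))),
  (compile 6 (codes 0 1 (PLt 0 0))), (compile 6 (codes 0 1 (PZero 0))),
  (compile 6 (codes 2 3 (is_min 0 1))), (compile 6 (codes 2 3 (is_max 0 1))),
  (compile 6 (codes 2 3 (is_left_end 0 1))), (compile 6 (codes 2 3 (is_right_end 0 1))).
split; first exact: is_lr_pair_defines_domain.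
split; first exact: (codes_defines_fun1 z z_least I_dense (F := id)).
split; first exact: codes_defines_fun2.
split; first exact: codes_defines_fun2.
split; first by apply: codes_defines_const => // S v /=; rewrite ltxx.
split; first exact: codes_defines_const.
split; first exact: codes_defines_fun1.
split; first exact: codes_defines_fun1.
split; exact: codes_defines_fun1.
Qed.
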